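(* There exist a constant $c>0$ and a family of graphs $\mathcal G$ (containing an $n$-vertex graph for infinitely many $n$) such that for every $n$-vertex graph $G\in\mathcal G$ and every $\rho\ge c/\log n$, every $\rho$-dense aggregator of $G$ has size $\Omega^*\big(n^{\frac{3\log n}{8\log\log n}}\big)$.
   Context: For a graph with $n'\ge 2$ vertices and $m'$ edges its density is $m'/\binom{n'}{2}$; a one-vertex graph has density $1$. A $\rho$-dense aggregator of a graph $G$ is a collection of nonempty vertex sets $S_1,\dots,S_k$ such that every clique of $G$ is contained in some $S_i$ and each induced subgraph $G[S_i]$ has density at least $\rho$; its size is $k$. The notation $\Omega^*(\cdot)$ hides multiplicative factors that are sublinear in $n$. Logarithms are base 2. *)

From mathcomp Require Import all_boot.
From Stdlib Require Import Reals.

Set Implicit Arguments.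
Unset Strict Implicit.
Unset Printing Implicit Defensive.

Definition simple_graph (n : nat) (e : rel 'I_n) : Prop :=
  symmetric e /\ irreflexive e.

Definition is_clique (n : nat) (e : rel 'I_n) (K : {set 'I_n}) : Prop :=
  forall x y, x \in K -> y \in K -> x != y -> e x y.

Definition induced_edges (n : nat) (e : rel 'I_n) (S : {set 'I_n}) : nat :=
  #|[set p : 'I_n * 'I_n | [&& p.1 \in S, p.2 \in S, (p.1 < p.2)%N & e p.1 p.2]]|.

(* Density of G[S]: m' / binom(n',2) if n' >= 2, and 1 otherwise
   (the paper defines it as 1 for one-vertex graphs; aggregator sets are
   nonempty, so the value on the empty set is irrelevant). *)
Definition density (n : nat) (e : rel 'I_n) (S : {set 'I_n}) : R :=
  if (2 <= #|S|)%N
  then (INR (induced_edges e S) / INR 'C(#|S|, 2))%R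
  else 1%R.

Definition dense_aggregator (n : nat) (e : rel 'I_n) (rho : R)
    (Ss : seq {set 'I_n}) : Prop :=
  (forall K, is_clique e K -> exists2 S, S \in Ss & K \subset S) /\
  (forall S, S \in Ss -> S != set0 /\ (rho <= density e S)%R).

Definition log2 (x : R) : R := (ln x / ln 2)%R.

From mathcomp Require Import all_boot zify.
From Stdlib Require Import Reals Lra.

(* Take n = 2^M with M = 2^l and l = 2^j, cut the vertex set into t = M/l blocks of
   size B = n/t, and label every pair of vertices independently and uniformly in
   {0, ..., M-1}, the pair being an edge when its label is 0 (edge density 1/M = 1/log n).
   Conditioned on a given transversal of the blocks being a clique, a Chernoff bound
   (through the exact exponential moment of the number of zero labels) and a union bound
   over vertex sets show that with probability at least 1/2 no set of more than
   s = 8M^2 vertices has density at least 16/M.  Double counting then yields a labelling with no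
   such dense set and at least B^t / (2 M^(t choose 2)) transversal cliques.  A
   (16/log n)-dense aggregator of that graph only uses sets of at most s vertices, each
   containing at most s^t transversals, so it has at least
   B^t / (2 M^(t choose 2) s^t) >= 2^(3M^2/(8l)) = n^(3 log n / (8 log log n)) sets. *)

Set Implicit Arguments.
Unset Strict Implicit.
Unset Printing Implicit Defensive.

(* [Reals] rebinds [^] on [nat] to [Nat.pow]; restore MathComp's [expn]. *)
Local Notation "m ^ n" := (expn m n) : nat_scope.

Lemma leq_exp2rW m n e : m <= n -> m ^ e <= n ^ e.
Proof. by move=> le_mn; elim: e => // e IH; rewrite !expnS leq_mul. Qed.

Lemma bin_leq_exp n k : 'C(n, k) <= n ^ k.
Proof.
have ffact_leq_exp m : m ^_ k <= m ^ k.
  elim: k m => [|k IH] m //; rewrite ffactnS expnS leq_mul2l.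
  by rewrite (leq_trans (IH _)) ?orbT // leq_exp2rW // leq_pred.
by rewrite (leq_trans _ (ffact_leq_exp n)) // -bin_ffact leq_pmulr ?fact_gt0.
Qed.

Lemma bin2_double k : 'C(k, 2) * 2 = k * k.-1.
Proof. by elim: k => // k IH; rewrite binS bin1 mulnDl IH; case: k {IH} => //= k; lia. Qed.

Lemma exp2_ge_linear l : 8 <= l -> 24 * l + 32 <= 2 ^ l.
Proof.
elim: l => // l IH; rewrite leq_eqVlt => /predU1P [<- //|le8l].
by have := IH le8l; rewrite expnS; lia.
Qed.

Lemma INR_expn m k : INR (m ^ k) = (INR m ^ k)%R.
Proof. by rewrite -pow_INR; congr INR; elim: k => // k IH; rewrite expnS IH. Qed.

Lemma expnS_leq3 q r : 0 < q -> r <= q -> q.+1 ^ r <= 3 * q ^ r.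
Proof.
move=> q_gt0 le_rq; apply/leP/INR_le; rewrite mult_INR !INR_expn.
have q_pos : (0 < INR q)%R by apply/lt_0_INR/ltP.
have -> : INR q.+1 = (INR q * (1 + / INR q))%R by rewrite S_INR; field; lra.
rewrite Rpow_mult_distr.
suff : ((1 + / INR q) ^ r <= 3)%R.
  have INR3 : INR 3 = 3%R by rewrite /=; ring.
  by have := pow_le (INR q) r (Rlt_le _ _ q_pos); rewrite INR3; nra.
have inv_pos : (0 < / INR q)%R by apply: Rinv_0_lt_compat.
have le_rq_R : (INR r * / INR q <= 1)%R.
  apply: (Rmult_le_reg_r (INR q)) => //; rewrite Rmult_assoc Rinv_l; last lra.
  by rewrite Rmult_1_r Rmult_1_l; apply/le_INR/leP.
(* (1 + 1/q)^r <= exp (1/q)^r = exp (r/q) <= e <= 3 *)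
apply: (Rle_trans _ (exp (/ INR q) ^ r)%R).
  by apply: pow_incr; split; [lra | apply: exp_ineq1_le].
have -> : (exp (/ INR q) ^ r = exp (INR r * / INR q))%R.
  elim: r {le_rq le_rq_R} => [|r IH]; first by rewrite Rmult_0_l exp_0.
  by rewrite -tech_pow_Rmult IH S_INR -exp_plus; f_equal; ring.
apply: Rle_trans exp_le_3.
have [lt_r1|->] := Rle_lt_or_eq_dec _ _ le_rq_R; last exact: Rle_refl.
exact/Rlt_le/exp_increasing.
Qed.

Lemma expnS_leq q N : 0 < q -> q.+1 ^ N <= 3 ^ (N %/ q).+1 * q ^ N.
Proof.
move=> q_gt0; rewrite {1 3}(divn_eq N q) !expnD expnSr mulnACA.
apply: leq_mul; last by apply: expnS_leq3; rewrite // ltnW // ltn_mod.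
by rewrite [N %/ q * q]mulnC !expnM -expnMn leq_exp2rW // expnS_leq3.
Qed.

Section ExponentialMoment.
Variables (T : finType) (q' : nat).
Local Notation q := q'.+1.
Implicit Types (f : {ffun T -> 'I_q}) (A P : {set T}).

Definition nzeros f P := #|[set a in P | f a == ord0]|.
Definition vanishes_on f A := [forall a in A, f a == ord0].

Lemma prod_vanishes f A : \prod_(a in A) (f a == ord0) = vanishes_on f A.
Proof.
rewrite /vanishes_on.
have [/forall_inP f0|/forall_inPn [a Aa /negbTE fa]] := boolP [forall a in A, f a == ord0].
  by rewrite big1 // => a /f0 /eqP ->.
by rewrite (bigD1 a) //= fa mul0n.
Qed.

(* Both sides equal the product over [a] of the sum over the value [x] of [f a]. *)
Lemma sum_vanishes_exp2_nzeros A P : [disjoint A & P] ->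
  \sum_f vanishes_on f A * 2 ^ nzeros f P =
  \prod_a (if a \in A then 1 else if a \in P then q.+1 else q).
Proof.
move=> dAP.
pose phi a (x : 'I_q) := (if a \in A then nat_of_bool (x == ord0) else 1) *
                          (if a \in P then 2 ^ (x == ord0) else 1).
transitivity (\prod_a \sum_(x : 'I_q) phi a x).
  rewrite bigA_distr_bigA; apply: eq_bigr => f _.
  rewrite big_split /= -(prod_vanishes f A) -big_mkcond /=.
  congr (_ * _); rewrite -big_mkcond /= -expn_sum; congr (2 ^ _).
  rewrite /nzeros -sum1_card big_mkcond [RHS]big_mkcond /=; apply: eq_bigr => a _.
  by rewrite !inE; case: (a \in P); case: (f a == ord0).
apply: eq_bigr => a _; rewrite /phi.
case: ifP => [Aa|_].
  rewrite (disjointFr dAP Aa) (bigD1 ord0) //= big1 // => x /negbTE ->.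
  by rewrite muln1.
case: ifP => _; last by rewrite (eq_bigr (fun _ => 1)) // sum1_card card_ord.
rewrite (bigD1 ord0) //= (eq_bigr (fun _ => 1)); last by move=> x /negbTE ->.
by rewrite sum1_card cardC1 card_ord.
Qed.

Lemma sum_vanishes_prod A : \sum_f vanishes_on f A = \prod_a (if a \in A then 1 else q).
Proof.
have nzeros0 f : nzeros f set0 = 0.
  by apply/eqP; rewrite cards_eq0; apply/eqP/setP => a; rewrite !inE.
rewrite (eq_bigr (fun f => vanishes_on f A * 2 ^ nzeros f set0)); last first.
  by move=> f _; rewrite nzeros0 muln1.
rewrite sum_vanishes_exp2_nzeros -?setI_eq0 ?setI0 //.
by apply: eq_bigr => a _; rewrite in_set0.
Qed.

Lemma sum_vanishes A : (\sum_f vanishes_on f A) * q ^ #|A| = q ^ #|T|.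
Proof.
rewrite sum_vanishes_prod (bigID (mem A)) /= big1 ?mul1n; last by move=> a ->.
rewrite (eq_bigr (fun _ => q)); last by move=> a /negbTE ->.
by rewrite prod_nat_const -expnD addnC -(cardC A).
Qed.

Lemma exp_moment A P : [disjoint A & P] ->
  (\sum_f vanishes_on f A * 2 ^ nzeros f P) * q ^ #|P| =
  q.+1 ^ #|P| * \sum_f vanishes_on f A.
Proof.
move=> dAP; rewrite sum_vanishes_exp2_nzeros // sum_vanishes_prod.
rewrite (bigID (mem P)) [in RHS](bigID (mem P)) /=.
have -> : \prod_(a in P) (if a \in A then 1 else if a \in P then q.+1 else q) = q.+1 ^ #|P|.
  by rewrite -prod_nat_const; apply: eq_bigr => a Pa; rewrite (disjointFl dAP Pa) Pa.
have -> : \prod_(a in P) (if a \in A then 1 else q) = q ^ #|P|.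
  by rewrite -prod_nat_const; apply: eq_bigr => a Pa; rewrite (disjointFl dAP Pa).
rewrite (eq_bigr (fun a => if a \in A then 1 else q)) => [|a /negbTE -> //].
by rewrite mulnAC mulnA.
Qed.

Lemma nzeros_setD f P A : nzeros f P <= nzeros f (P :\: A) + #|A|.
Proof.
rewrite /nzeros; apply: leq_trans (leq_card_setU _ _).
by apply/subset_leq_card/subsetP => a; rewrite !inE; case: (a \in A) => //= ->.
Qed.

(* Chernoff: Markov's inequality for [2 ^ nzeros f P], whose sum [exp_moment] computes. *)
Lemma vanishes_tail A P m : [disjoint A & P] ->
  (\sum_f (vanishes_on f A && (m <= nzeros f P))) * 2 ^ m <=
  3 ^ (#|P| %/ q).+1 * \sum_f vanishes_on f A.
Proof.
move=> dAP.
have markov : (\sum_f (vanishes_on f A && (m <= nzeros f P))) * 2 ^ m <=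
              \sum_f vanishes_on f A * 2 ^ nzeros f P.
  rewrite big_distrl /=; apply: leq_sum => f _.
  case: (vanishes_on f A) => //=; rewrite mul1n.
  by have [le_m|_] := leqP m (nzeros f P); rewrite ?mul1n ?leq_exp2l.
have qP_gt0 : 0 < q ^ #|P| by rewrite expn_gt0.
rewrite -(leq_pmul2r qP_gt0).
apply: leq_trans (leq_mul markov (leqnn _)) _.
by rewrite exp_moment // [X in _ <= X]mulnAC leq_mul2r expnS_leq ?orbT.
Qed.

End ExponentialMoment.

Lemma exists_leq_average (T : finType) (F : T -> nat) a :
  0 < #|T| -> a * #|T| <= \sum_x F x -> exists x, a <= F x.
Proof.
move=> T_gt0 le_sum; have /card_gt0P [x0 _] := T_gt0.
have [->|a_gt0] := posnP a; first by exists x0.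
apply/existsP; apply: contraLR le_sum => /existsPn small; rewrite -ltnNge.
have : \sum_x F x <= \sum_(x : T) a.-1.
  by apply: leq_sum => x _; have := small x; rewrite -ltnNge; lia.
by rewrite sum_nat_const => /leq_ltn_trans; apply; rewrite mulnC ltn_pmul2r // ltn_predL.
Qed.

Lemma sum_subsets_leq n (P : pred {set 'I_n}) (F : {set 'I_n} -> nat) W : 0 < n ->
    (forall S, P S -> F S * (n.+1 * n ^ #|S|) <= W) ->
  \sum_(S | P S) F S <= W.
Proof.
move=> n_gt0 F_bound.
have size_eq (S : {set 'I_n}) (k : 'I_n.+1) : (inord #|S| == k) = (#|S| == k).
  by rewrite -val_eqE /= inordK // ltnS -[n in _ <= n]card_ord max_card.
rewrite (partition_big (fun S : {set 'I_n} => inord #|S| : 'I_n.+1) predT) //=.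
rewrite -(leq_pmul2l (ltn0Sn n)) big_distrr /=.
apply: (@leq_trans (\sum_(k < n.+1) W)); last by rewrite sum_nat_const card_ord.
apply: leq_sum => k _.
have nk_gt0 : 0 < n ^ k by rewrite expn_gt0 n_gt0.
rewrite -(leq_pmul2r nk_gt0) big_distrr big_distrl /=.
apply: (@leq_trans (\sum_(S : {set 'I_n} | #|S| == k) W)).
  rewrite big_mkcond [X in _ <= X]big_mkcond; apply: leq_sum => S _ /=.
  rewrite size_eq; case: (P S) (F_bound S) => //=.
  by case: eqP => // <- /(_ isT); rewrite mulnCA mulnA.
rewrite sum_nat_cond_const card_draws card_ord mulnC leq_mul2l.
by rewrite bin_leq_exp orbT.
Qed.

Lemma card_leq_sum_cover (T : finType) (U : Type) (P : pred T) (Q : U -> pred T) (Ss : seq U) :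
    (forall x, P x -> has (fun S => Q S x) Ss) ->
  #|[set x | P x]| <= \sum_(S <- Ss) #|[set x | Q S x]|.
Proof.
elim: Ss P => [|S Ss IH] P covP.
  rewrite big_nil leqn0 cards_eq0; apply/eqP/setP => x; rewrite !inE.
  by apply/negP => /covP.
rewrite big_cons.
have split_Q : [set x | P x] \subset [set x | Q S x] :|: [set x | P x && ~~ Q S x].
  by apply/subsetP => x; rewrite !inE => ->; case: (Q S x).
apply: leq_trans (subset_leq_card split_Q) _; apply: leq_trans (leq_card_setU _ _) _.
rewrite leq_add2l; apply: IH => x /andP [Px notQx].
by move: (covP x Px) => /=; rewrite (negbTE notQx).
Qed.

Section OrderedPairs.
Variable n : nat.
Implicit Types (x y : 'I_n) (S : {set 'I_n}).

Definition lt_pairs S : {set 'I_n * 'I_n} :=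
  [set p | [&& p.1 \in S, p.2 \in S & p.1 < p.2]].

Lemma card_lt_pairs S : 2 * #|lt_pairs S| <= #|S| * #|S|.
Proof.
pose swap (p : 'I_n * 'I_n) := (p.2, p.1).
have swap_inj : injective swap by move=> [a b] [c d] [-> ->].
have disj : [disjoint lt_pairs S & swap @: lt_pairs S].
  rewrite -setI_eq0; apply/eqP/setP => [[a b]]; rewrite !inE /=.
  apply/negP => /andP [/and3P [_ _ lt_ab] /imsetP [[c d]]].
  by rewrite inE /= => /and3P [_ _ lt_cd] [eq_ad eq_bc]; subst; lia.
have sub : lt_pairs S :|: swap @: lt_pairs S \subset setX S S.
  apply/subsetP => p; rewrite !inE => /orP [/and3P [-> -> _] //|/imsetP [[a b]]].
  by rewrite inE /= => /and3P [Sa Sb _] ->; rewrite /= Sa Sb.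
have := subset_leq_card sub.
by rewrite cardsU (disjoint_setI0 disj) cards0 subn0 card_imset // addnn -mul2n cardsX.
Qed.

Definition upair x y : 'I_n * 'I_n := if x < y then (x, y) else (y, x).

Lemma upairC x y : x != y -> upair x y = upair y x.
Proof.
rewrite /upair => neq_xy; case: ltngtP => // /val_inj eq_xy.
by rewrite eq_xy eqxx in neq_xy.
Qed.

End OrderedPairs.

Section RandomGraph.
Variables (n q' : nat).
Local Notation q := q'.+1.
Local Notation labelling := {ffun 'I_n * 'I_n -> 'I_q}.
Implicit Types (f : labelling) (S : {set 'I_n}).

(* For a uniform [f] this is the random graph with edge probability [1/q]. *)
Definition graph_of f : rel 'I_n := fun x y => (x != y) && (f (upair x y) == ord0).

Lemma graph_of_simple f : simple_graph (graph_of f).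
Proof.
split=> [x y|x]; rewrite /graph_of ?eqxx // eq_sym.
by case: (boolP (y != x)) => //= neq_yx; rewrite upairC // eq_sym.
Qed.

Lemma induced_edges_graph_of f S : induced_edges (graph_of f) S = nzeros f (lt_pairs S).
Proof.
rewrite /induced_edges /nzeros; apply: eq_card => -[x y]; rewrite !inE /= /graph_of /upair.
case: ltnP => lt_xy; rewrite ?andbF ?andbT //=.
by rewrite neq_ltn lt_xy andbA.
Qed.

(* The vertex blocks are the images of the [v i]; [g] picks one vertex in each. *)
Section Transversals.
Variables (t B : nat) (v : 'I_t -> 'I_B -> 'I_n).
Implicit Type g : {ffun 'I_t -> 'I_B}.
Local Notation tpairs := (lt_pairs [set: 'I_t]).

Definition transversal g : {set 'I_n} := [set v i (g i) | i : 'I_t].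

Definition transversal_pairs g : {set 'I_n * 'I_n} :=
  [set upair (v p.1 (g p.1)) (v p.2 (g p.2)) | p in tpairs].

Lemma card_transversal_pairs g : #|transversal_pairs g| <= #|tpairs|.
Proof. exact: leq_imset_card. Qed.

Lemma transversal_clique f g :
  vanishes_on f (transversal_pairs g) -> is_clique (graph_of f) (transversal g).
Proof.
move=> /forall_inP f0 x y /imsetP [i _ ->] /imsetP [j _ ->] neq_xy.
rewrite /graph_of neq_xy /=.
have neq_ij : i != j by apply: contra neq_xy => /eqP ->.
case: (ltngtP i j) => [lt_ij|lt_ji|eq_ij]; last by rewrite (val_inj eq_ij) eqxx in neq_ij.
  by apply: f0; apply/imsetP; exists (i, j); rewrite ?inE.
by rewrite upairC //; apply: f0; apply/imsetP; exists (j, i); rewrite ?inE.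
Qed.

Section CliqueCover.
Hypothesis v_inj : forall i, injective (v i).
Variable s : nat.

Lemma card_transversals_sub S : #|[set g | transversal g \subset S]| <= #|S| ^ t.
Proof.
pose vals g : {ffun 'I_t -> 'I_n} := [ffun i => v i (g i)].
have vals_inj : injective vals.
  by move=> g1 g2 /ffunP eq_vals; apply/ffunP => i; have := eq_vals i; rewrite !ffunE => /v_inj.
rewrite -(card_imset _ vals_inj) -[t in _ ^ t]card_ord -card_ffun_on.
apply/subset_leq_card/subsetP => h /imsetP [g]; rewrite inE => sub_gS ->.
by apply/ffun_onP => i; rewrite ffunE (subsetP sub_gS) // imset_f.
Qed.

Lemma card_clique_transversals f (Ss : seq {set 'I_n}) :
    (forall K, is_clique (graph_of f) K ->
       exists2 S, S \in Ss & (K \subset S) && (#|S| <= s)) ->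
  #|[set g | vanishes_on f (transversal_pairs g)]| <= size Ss * s ^ t.
Proof.
move=> cover.
pose P g := vanishes_on f (transversal_pairs g).
pose Q S g := (transversal g \subset S) && (#|S| <= s).
have cover_PQ g : P g -> has (fun S => Q S g) Ss.
  by move=> /transversal_clique /cover [S inS subS]; apply/hasP; exists S.
apply: leq_trans (card_leq_sum_cover cover_PQ) _.
rewrite -sum1_size big_distrl /=; apply: leq_sum => S _; rewrite mul1n.
have [small|large] := leqP #|S| s; last first.
  suff -> : [set g | Q S g] = set0 by rewrite cards0.
  by apply/setP => g; rewrite !inE /Q leqNgt large andbF.
apply: leq_trans (leq_exp2rW t small).
apply: leq_trans (card_transversals_sub S).
by apply/subset_leq_card/subsetP => g; rewrite !inE => /andP [].
Qed.

End CliqueCover.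

Section SparseGraph.
Variables (s : nat) (thr : nat -> nat).
Hypothesis n_gt0 : 0 < n.
Hypothesis B_gt0 : 0 < B.
(* Pays for the union bound over the at most [n ^ k] sets of each of the [n.+1] sizes [k],
   with a factor 2 to spare. *)
Hypothesis thr_large : forall k, s < k <= n ->
  2 * n.+1 * n ^ k * 3 ^ (k * k %/ q).+1 <= 2 ^ (thr k - #|tpairs|).

Definition has_dense_set f :=
  [exists S : {set 'I_n}, (s < #|S|) && (thr #|S| <= nzeros f (lt_pairs S))].

(* Conditioning on the transversal's pairs costs at most [#|tpairs|] zeros of a dense [S];
   the remaining ones lie outside the conditioned pairs. *)
Definition dense_outside g S f :=
  vanishes_on f (transversal_pairs g) &&
  (thr #|S| - #|tpairs| <= nzeros f (lt_pairs S :\: transversal_pairs g)).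

Lemma card_dense_outside g S : s < #|S| ->
  (\sum_(f : labelling) dense_outside g S f) * (n.+1 * n ^ #|S|) * 2 <=
  \sum_(f : labelling) vanishes_on f (transversal_pairs g).
Proof.
move=> large_S; set A := transversal_pairs g; set P := lt_pairs S :\: A.
set k := #|S|; set b := (k * k %/ q).+1.
set X := \sum_(f : labelling) _; set W := \sum_(f : labelling) _.
have dAP : [disjoint A & P].
  by rewrite -setI_eq0; apply/eqP/setP => a; rewrite !inE; case: (a \in A); rewrite ?andbF.
have le_P : (#|P| %/ q).+1 <= b.
  rewrite ltnS leq_div2r // (leq_trans (subset_leq_card (subsetDl _ _))) //.
  by have := card_lt_pairs S; lia.
have le_k : s < k <= n by rewrite large_S -[n in _ <= n]card_ord max_card.
have b_gt0 : 0 < 3 ^ b by rewrite expn_gt0.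
rewrite -(leq_pmul2r b_gt0).
have grow : X * (n.+1 * n ^ k) * 2 * 3 ^ b <= X * 2 ^ (thr k - #|tpairs|).
  have -> : X * (n.+1 * n ^ k) * 2 * 3 ^ b = X * (2 * n.+1 * n ^ k * 3 ^ b) by lia.
  by rewrite leq_mul2l thr_large ?orbT.
apply: leq_trans grow (leq_trans (vanishes_tail q' _ dAP) _).
by rewrite mulnC leq_mul2l leq_pexp2l ?orbT.
Qed.

Lemma sum_dense_outside g :
  2 * \sum_(S : {set 'I_n} | s < #|S|) \sum_(f : labelling) dense_outside g S f <=
  \sum_(f : labelling) vanishes_on f (transversal_pairs g).
Proof.
rewrite big_distrr /=; apply: sum_subsets_leq => // S large_S.
by rewrite -mulnA mulnC card_dense_outside.
Qed.

Lemma dense_outside_witness g f :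
    vanishes_on f (transversal_pairs g) -> has_dense_set f ->
  exists2 S : {set 'I_n}, s < #|S| & dense_outside g S f.
Proof.
move=> f0 /existsP [S /andP [large_S dense_S]]; exists S; rewrite // /dense_outside f0 /=.
apply: leq_trans (leq_sub2r _ dense_S) _; rewrite leq_subLR.
apply: leq_trans (nzeros_setD f _ (transversal_pairs g)) _.
by rewrite addnC leq_add2r card_transversal_pairs.
Qed.

Lemma sum_vanishes_sparse g :
  \sum_(f : labelling) vanishes_on f (transversal_pairs g) <=
  2 * \sum_(f : labelling) (vanishes_on f (transversal_pairs g) && ~~ has_dense_set f).
Proof.
set A := transversal_pairs g.
have dense_part : \sum_(f : labelling) (vanishes_on f A && has_dense_set f) <=
    \sum_(S : {set 'I_n} | s < #|S|) \sum_(f : labelling) dense_outside g S f.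
  rewrite exchange_big /=; apply: leq_sum => f _.
  case: (boolP (vanishes_on f A)) => //= f0; case: (boolP (has_dense_set f)) => // dense.
  by have [S large_S outside] := dense_outside_witness f0 dense; rewrite (bigD1 S) //= outside.
have split_sum : \sum_(f : labelling) vanishes_on f A =
    \sum_(f : labelling) (vanishes_on f A && has_dense_set f) +
    \sum_(f : labelling) (vanishes_on f A && ~~ has_dense_set f).
  by rewrite -big_split; apply: eq_bigr => f _; case: (vanishes_on f A); case: (has_dense_set f).
by have := sum_dense_outside g; rewrite -/A; lia.
Qed.

Lemma exists_sparse_many_cliques : exists f : labelling, ~~ has_dense_set f /\
  B ^ t <= 2 * q ^ #|tpairs| * #|[set g | vanishes_on f (transversal_pairs g)]|.
Proof.
pose good f g := vanishes_on f (transversal_pairs g) && ~~ has_dense_set f.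
pose F f :=
  ~~ has_dense_set f * (2 * q ^ #|tpairs| * #|[set g | vanishes_on f (transversal_pairs g)]|).
have card_lab : #|{: labelling}| = q ^ #|{: 'I_n * 'I_n}| by rewrite card_ffun card_ord.
have [f] : exists f, B ^ t <= F f.
  apply: exists_leq_average; first by rewrite card_lab expn_gt0.
  have -> : \sum_(f : labelling) F f = 2 * q ^ #|tpairs| * \sum_g \sum_(f : labelling) good f g.
    rewrite exchange_big big_distrr /=; apply: eq_bigr => f _; rewrite /F /good.
    case: (has_dense_set f) => /=; first by rewrite mul0n big1 ?muln0 // => g; rewrite andbF.
    rewrite mul1n; congr (_ * _); rewrite -sum1_card big_mkcond.
    by apply: eq_bigr => g _; rewrite inE andbT.
  have sum_const : \sum_(g : {ffun 'I_t -> 'I_B}) q ^ #|{: 'I_n * 'I_n}| =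
                   B ^ t * q ^ #|{: 'I_n * 'I_n}| by rewrite sum_nat_const card_ffun !card_ord.
  rewrite card_lab -sum_const big_distrr /=; apply: leq_sum => g _.
  rewrite -(sum_vanishes q' (transversal_pairs g)) mulnAC.
  apply: leq_mul; first exact: sum_vanishes_sparse.
  by rewrite leq_pexp2l ?card_transversal_pairs.
rewrite /F; case: (boolP (has_dense_set f)) => [_|sparse] /=.
  by rewrite mul0n leqn0 expn_eq0 eqn0Ngt B_gt0.
by rewrite mul1n => many; exists f.
Qed.

End SparseGraph.
End Transversals.
End RandomGraph.

Lemma dense_threshold_large M L k : 0 < M -> L <= M * M -> 8 * M * M < k ->
  2 * (2 ^ M).+1 * (2 ^ M) ^ k * 3 ^ (k * k %/ M).+1 <= 2 ^ (16 * 'C(k, 2) %/ M - L).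
Proof.
move=> M_gt0 le_LM lt_k; set K := k * k %/ M.
have le_lhs : 2 * (2 ^ M).+1 * (2 ^ M) ^ k * 3 ^ K.+1 <= 2 ^ (M + 2 + M * k + 2 * K.+1).
  have le_M2 : 2 * (2 ^ M).+1 <= 2 ^ (M + 2).
    have pos : 0 < 2 ^ M by rewrite expn_gt0.
    by rewrite addn2 !expnS; lia.
  have le_3 : 3 ^ K.+1 <= 2 ^ (2 * K.+1) by rewrite expnM leq_exp2rW.
  by rewrite 2!expnD -expnM; apply: leq_mul (leq_mul le_M2 (leqnn _)) le_3.
apply: leq_trans le_lhs _; rewrite leq_exp2l //; set x := _ + _ + _ + _.
suff le_sum : L + x <= 16 * 'C(k, 2) %/ M by rewrite -(addKn L x) leq_sub2r.
rewrite leq_divRL //.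
have -> : 16 * 'C(k, 2) = 8 * (k * k.-1) by rewrite -bin2_double; lia.
have le_KM : K * M <= k * k by apply: leq_divM.
have le_LM3 : L * M <= M * M * M by rewrite leq_mul2r le_LM orbT.
have le_M : M <= M * M by rewrite leq_pmulr.
have le_Mk : M <= k by lia.
have le_MMM : M * M * M <= M * M * k by rewrite leq_mul2l le_Mk orbT.
have lt_X : 8 * (M * M * k) < k * k by rewrite !mulnA ltn_mul2r lt_k andbT; lia.
have le_k2 : 9 * k <= k * k by rewrite leq_mul2r; apply/orP; right; lia.
have le_MMk : M * M <= M * M * k by rewrite leq_pmulr //; lia.
rewrite -subn1 mulnBr muln1 /x.
lia.
Qed.

Lemma clique_count_exponent M l t tau L sz :
    t * l = M -> 2 * L <= t * t -> tau <= l -> 24 * l + 32 <= M -> M = 2 ^ l ->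
    2 ^ ((M - tau) * t) <= 2 * M ^ L * (sz * (2 ^ (2 * l + 3)) ^ t) ->
  exists E, 3 * (M * M) <= 8 * (l * E) /\ 2 ^ E <= sz.
Proof.
move=> tl_M le_L le_tau le_M M_def le_sz.
(* [2 ^ X] collects the factors [2], [M ^ L] and [(2 ^ (2 * l + 3)) ^ t]. *)
set X := 1 + l * L + (2 * l + 3) * t; set E := (M - tau) * t - X.
have lE : l * E = (M * M - tau * M) - (l + l * l * L + 2 * (l * M) + 3 * M).
  rewrite mulnBr; congr (_ - _); first by rewrite mulnC -mulnA tl_M mulnBl.
  by rewrite /X -tl_M; nia.
have le_llL : 2 * (l * l * L) <= M * M.
  have : l * l * (2 * L) <= l * l * (t * t) by rewrite leq_mul2l le_L orbT.
  by rewrite -tl_M; nia.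
have le_tauM : tau * M <= l * M by rewrite leq_mul2r le_tau orbT.
have le_lM : 24 * (l * M) + 32 * M <= M * M by have := leq_mul le_M (leqnn M); nia.
have le_l_M : l <= M by lia.
have exponent : 3 * (M * M) <= 8 * (l * E) by rewrite lE; lia.
exists E; split => //.
have le_X : X <= (M - tau) * t.
  rewrite leqNgt; apply/negP => /ltnW; rewrite -subn_eq0 -/E => /eqP E0.
  by move: exponent; rewrite E0 muln0 leqn0 !muln_eq0 M_def expn_eq0.
have rhs : 2 * M ^ L * (sz * (2 ^ (2 * l + 3)) ^ t) = 2 ^ X * sz.
  by rewrite /X M_def -!expnM !expnD expn1 [sz * _]mulnC mulnA.
rewrite rhs -(subnK le_X) expnD -/E mulnC in le_sz.
by rewrite leq_pmul2l ?expn_gt0 in le_sz.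
Qed.

Lemma block_vertex_subproof t B n (tB_n : t * B = n) (i : 'I_t) (b : 'I_B) : i * B + b < n.
Proof.
rewrite -tB_n (@leq_trans (i.+1 * B)) ?leq_mul2r ?ltn_ord ?orbT //.
by rewrite mulSn addnC ltn_add2r.
Qed.

Definition block_vertex t B n (tB_n : t * B = n) (i : 'I_t) (b : 'I_B) : 'I_n :=
  Ordinal (block_vertex_subproof tB_n i b).

Lemma block_vertex_inj t B n (tB_n : t * B = n) i : injective (block_vertex tB_n i).
Proof. by move=> b c /(congr1 val) /= /addnI /val_inj. Qed.

Lemma exists_sparse_graph j : 2 < j ->
  let l := 2 ^ j in let M := 2 ^ l in
  exists e : rel 'I_(2 ^ M), [/\ simple_graph e,
    forall S : {set 'I_(2 ^ M)}, 2 ^ (2 * l + 3) < #|S| ->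
      induced_edges e S * M < 16 * 'C(#|S|, 2) &
    forall Ss : seq {set 'I_(2 ^ M)},
      (forall K, is_clique e K ->
         exists2 S, S \in Ss & (K \subset S) && (#|S| <= 2 ^ (2 * l + 3))) ->
      exists E, 3 * (M * M) <= 8 * (l * E) /\ 2 ^ E <= size Ss].
Proof.
move=> lt2j l M.
have le_jl : j <= l by apply/ltnW/ltn_expl.
have le8l : 8 <= l by rewrite /l (_ : 8 = 2 ^ 3) // leq_exp2l.
have M_gt0 : 0 < M by rewrite expn_gt0.
set tau := l - j; set t := 2 ^ tau; set B := 2 ^ (M - tau); set s := 2 ^ (2 * l + 3).
have tl_M : t * l = M by rewrite -expnD subnK.
have le_tM : t <= M by rewrite leq_exp2l // leq_subr.
have tB_n : t * B = 2 ^ M.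
  by rewrite -expnD subnKC // (leq_trans (leq_subr _ _)) // ltnW // ltn_expl.
have le_L : 2 * #|lt_pairs [set: 'I_t]| <= t * t.
  by rewrite -[t in t * t]card_ord -cardsT card_lt_pairs.
pose q' := M.-1; have q_M : q'.+1 = M by rewrite prednK.
pose thr k := 16 * 'C(k, 2) %/ q'.+1.
have thr_large k : s < k <= 2 ^ M ->
    2 * (2 ^ M).+1 * (2 ^ M) ^ k * 3 ^ (k * k %/ q'.+1).+1 <= 2 ^ (thr k - #|lt_pairs [set: 'I_t]|).
  move=> /andP [lt_sk _]; have le_tt : t * t <= M * M by rewrite leq_mul.
  rewrite /thr q_M dense_threshold_large //; first lia.
  by move: lt_sk; rewrite /s expnD [2 * l]mulnC expnM -/M !expnS expn0 !muln1; lia.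
have [f [sparse many]] :=
  exists_sparse_many_cliques (block_vertex tB_n) (expn_gt0 2 M) (expn_gt0 2 _) thr_large.
exists (graph_of f); split; first exact: graph_of_simple.
  move=> S lt_sS; move/existsPn/(_ S): sparse.
  rewrite lt_sS /= -ltnNge /thr q_M leq_divRL // mulSn induced_edges_graph_of.
  by apply: leq_trans; rewrite addnC -addn1 leq_add2l.
move=> Ss cover.
have := card_clique_transversals (@block_vertex_inj _ _ _ tB_n) cover.
move=> /(leq_mul (leqnn (2 * q'.+1 ^ #|lt_pairs [set: 'I_t]|))) /(leq_trans many).
rewrite q_M /B -expnM => bound.
by apply: clique_count_exponent bound; rewrite // ?leq_subr // exp2_ge_linear.
Qed.

Lemma log2_expn2 m : log2 (INR (2 ^ m)) = INR m.
Proof.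
have ln2_pos : (0 < ln 2)%R by rewrite -ln_1; apply: ln_increasing; lra.
have INR2 : INR 2 = 2%R by rewrite /=; ring.
by rewrite /log2 INR_expn INR2 ln_pow; [field; lra | lra].
Qed.

Lemma Un_cv_inv_INR : Un_cv (fun n => 1 / INR n)%R 0.
Proof.
apply: (Un_cv_ext (fun n => / INR n)%R); first by move=> n; rewrite /Rdiv Rmult_1_l.
apply: cv_infty_cv_0 => A; have [N ltAN] := INR_unbounded A.
by exists N => n le_Nn; apply: (Rlt_le_trans _ _ _ ltAN); apply: le_INR.
Qed.

Lemma density_lt n (e : rel 'I_n) (S : {set 'I_n}) M : 0 < M -> 2 <= #|S| ->
  induced_edges e S * M < 16 * 'C(#|S|, 2) -> (density e S < 16 / INR M)%R.
Proof.
move=> M_gt0 two_S /ltP /lt_INR; rewrite /density two_S !mult_INR.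
set x := INR (induced_edges e S); set C := INR 'C(#|S|, 2) => lt_xM.
have C_pos : (0 < C)%R by apply/lt_0_INR/ltP; rewrite bin_gt0.
have M_pos : (0 < INR M)%R by apply/lt_0_INR/ltP.
have INR16 : INR 16 = 16%R by rewrite /=; ring.
apply: (Rmult_lt_reg_r (C * INR M)); first exact: Rmult_lt_0_compat.
have -> : (x / C * (C * INR M) = x * INR M)%R by field; lra.
have -> : (16 / INR M * (C * INR M) = 16 * C)%R by field; lra.
by rewrite -INR16.
Qed.

Lemma Rpower_exp2_le M l E : 0 < l -> 3 * (M * M) <= 8 * (l * E) ->
  (Rpower (INR (2 ^ M)) (3 * INR M / (8 * INR l)) <= INR (2 ^ E))%R.
Proof.
move=> l_gt0 /leP /le_INR; rewrite !mult_INR => le_E.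
have l_pos : (0 < INR l)%R by apply/lt_0_INR/ltP.
have INR2 : INR 2 = 2%R by rewrite /=; ring.
rewrite !INR_expn INR2 -!Rpower_pow ?Rpower_mult; try lra.
apply: Rle_Rpower; first lra.
apply: (Rmult_le_reg_r (8 * INR l)); first lra.
have -> : (INR M * (3 * INR M / (8 * INR l)) * (8 * INR l) = 3 * (INR M * INR M))%R by field; lra.
have INR3 : INR 3 = 3%R by rewrite /=; ring.
have INR8 : INR 8 = 8%R by rewrite /=; ring.
by rewrite INR3 INR8 in le_E; lra.
Qed.

Definition large_dense_aggregators (c : R) n (e : rel 'I_n) : Prop :=
  forall rho : R, (c / log2 (INR n) <= rho)%R ->
  forall Ss : seq {set 'I_n}, dense_aggregator e rho Ss ->
  (Rpower (INR n) (3 * log2 (INR n) / (8 * log2 (log2 (INR n)))) <= INR (size Ss))%R.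

Lemma exists_graph_large_dense_aggregators j : 2 < j ->
  exists e : rel 'I_(2 ^ 2 ^ 2 ^ j), simple_graph e /\ large_dense_aggregators 16 e.
Proof.
move=> lt2j; have := exists_sparse_graph lt2j.
set l := 2 ^ j; set M := 2 ^ l; set s := 2 ^ (2 * l + 3) => -[e [simple sparse many]].
exists e; split => // rho le_rho Ss [cover dense].
rewrite !log2_expn2 in le_rho *.
have M_gt0 : 0 < M by rewrite expn_gt0.
have small S : S \in Ss -> #|S| <= s.
  move=> inS; rewrite leqNgt; apply/negP => large.
  have two_S : 2 <= #|S| by apply: leq_trans large; rewrite ltnS expn_gt0.
  have := density_lt M_gt0 two_S (sparse S large).
  by have [_ ge_rho] := dense S inS; lra.
have [E [le_E le_size]] : exists E, 3 * (M * M) <= 8 * (l * E) /\ 2 ^ E <= size Ss.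
  by apply: many => K /cover [S inS subS]; exists S; rewrite // subS small.
apply: Rle_trans (Rpower_exp2_le _ le_E) _; first by rewrite expn_gt0.
exact/le_INR/leP.
Qed.

Theorem theorem4p1 :
  exists c : R, (0 < c)%R /\
  exists F : forall n : nat, rel 'I_n -> Prop,
    (forall n (e : rel 'I_n), F n e -> simple_graph e) /\
    (forall N : nat, exists n : nat, (N <= n)%N /\ exists e : rel 'I_n, F n e) /\
    (* Omega^*: a positive hidden factor h that is sublinear in n,
       valid for all sufficiently large n *)
    exists h : nat -> R,
      (forall n, (0 < h n)%R) /\
      Un_cv (fun n => (h n / INR n)%R) 0%R /\
      exists n0 : nat,
        forall (n : nat) (e : rel 'I_n), (n0 <= n)%N -> F n e ->
        forall rho : R, (c / log2 (INR n) <= rho)%R ->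
        forall Ss : seq {set 'I_n}, dense_aggregator e rho Ss ->
          (Rpower (INR n) (3 * log2 (INR n) / (8 * log2 (log2 (INR n))))
             / h n <= INR (size Ss))%R.
Proof.
exists 16%R; split; first lra.
exists (fun n e => simple_graph e /\ large_dense_aggregators 16 e).
split; first by move=> n e [].
split.
  move=> N; have [e He] := exists_graph_large_dense_aggregators (leq_addl N 3).
  exists (2 ^ 2 ^ 2 ^ (N + 3)); split; last by exists e.
  have le_exp m : m <= 2 ^ m by apply/ltnW/ltn_expl.
  exact: leq_trans (leq_addr 3 N) (leq_trans (le_exp _) (leq_trans (le_exp _) (le_exp _))).
exists (fun _ => 1%R); split; first by move=> _; lra.
split; first exact: Un_cv_inv_INR.
by exists 0 => n e _ [_ large] rho le_rho Ss agg; rewrite Rdiv_1_r; apply: large agg.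
Qed.
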